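(* Let $p$ be a prime and $t$ a real number. If $X\subset\mathbb{R}^k$ is Euclidean sub-$p$-toral, then so is $X\times\{0,t\}\subset\mathbb{R}^{k+1}$.
   Context: A $p$-torus is a group isomorphic to $(\mathbb{Z}_p)^\alpha$ for some $\alpha\ge1$. A set $X\subset\mathbb{R}^k$ is Euclidean sub-$p$-toral if there exist $n\ge k$, a $p$-torus $G$ and an action of $G$ on $\mathbb{R}^n$ by isometries such that $X$ (viewed in $\mathbb{R}^n$ via the standard inclusion $\mathbb{R}^k\subset\mathbb{R}^n$) is contained in a single $G$-orbit. *)

From HB Require Import structures.
From mathcomp Require Import all_boot all_order all_algebra all_fingroup.
From mathcomp Require Import reals.
Set Implicit Arguments. Unset Strict Implicit. Unset Printing Implicit Defensive.
Import Order.TTheory GRing.Theory Num.Theory.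
Local Open Scope ring_scope.

Definition Zp_pow (p alpha : nat) := {ffun 'I_alpha -> 'Z_p}.

Definition p_torus (p : nat) (gT : finGroupType) (G : {group gT}) : Prop :=
  exists alpha : nat, (1 <= alpha)%N /\
  exists f : Zp_pow p alpha -> gT,
    injective f /\
    [set f a | a in [set: Zp_pow p alpha]] = G :> {set gT} /\
    (forall a b : Zp_pow p alpha, f (a + b) = (f a * f b)%g).

Definition edist (R : realType) (n : nat) (x y : 'rV[R]_n) : R :=
  Num.sqrt (\sum_(i < n) (x 0 i - y 0 i) ^+ 2).

Definition isometry (R : realType) (n : nat) (f : 'rV[R]_n -> 'rV[R]_n) : Prop :=
  forall x y, edist (f x) (f y) = edist x y.

Definition isometric_action (R : realType) (n : nat) (gT : finGroupType)
  (G : {group gT}) (act : gT -> 'rV[R]_n -> 'rV[R]_n) : Prop :=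
  (forall x, act 1%g x = x) /\
  (forall g h, g \in G -> h \in G -> forall x, act (g * h)%g x = act g (act h x)) /\
  (forall g, g \in G -> isometry (act g)).

(* Standard inclusion R^k -> R^n (k <= n): pad with zeros. *)
Definition std_incl (R : realType) (k n : nat) (x : 'rV[R]_k) : 'rV[R]_n :=
  \row_(i < n) oapp (fun j : 'I_k => x 0 j) 0 (insub (val i)).

Definition euclidean_sub_p_toral (R : realType) (p k : nat) (X : 'rV[R]_k -> Prop) : Prop :=
  exists n : nat, (k <= n)%N /\
  exists (gT : finGroupType) (G : {group gT}), p_torus p G /\
  exists act : gT -> 'rV[R]_n -> 'rV[R]_n, isometric_action G act /\
  exists x0 : 'rV[R]_n, forall x, X x -> exists2 g, g \in G & std_incl n x = act g x0.

Definition times_0t (R : realType) (k : nat) (X : 'rV[R]_k -> Prop) (t : R)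
  : 'rV[R]_(k + 1) -> Prop :=
  fun y => exists (x : 'rV[R]_k) (c : R), X x /\ (c = 0 \/ c = t) /\
    y = row_mx x (\row_(j < 1) c).

From mathcomp Require Import all_boot all_order all_algebra all_fingroup.
From mathcomp Require Import reals complex zify ring.
Import Order.TTheory GRing.Theory Num.Theory.
Set Implicit Arguments. Unset Strict Implicit. Unset Printing Implicit Defensive.
Local Open Scope ring_scope.

(* If X lies in the orbit of x0 under a p-torus G acting isometrically on
   R^n, enlarge the space by a plane C and the group by a factor Z_p acting
   on C by the rotation w |-> c + z (w - c), where z <> 1 is a p-th root of
   unity and c = t / (1 - z).  This rotation has order dividing p and sends
   0 to t, so G x Z_p moves (x0, 0) to both (g x0, 0) and (g x0, t). *)

Section Coordinates.

Variable R : realType.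

Definition rcoord n (v : 'rV[R]_n) (j : nat) : R :=
  oapp (fun i : 'I_n => v 0 i) 0 (insub j).

Lemma rcoord_ord n (v : 'rV[R]_n) (i : 'I_n) : rcoord v i = v 0 i.
Proof. by rewrite /rcoord valK. Qed.

Lemma rcoord_out n (v : 'rV[R]_n) j : (n <= j)%N -> rcoord v j = 0.
Proof. by move=> h; rewrite /rcoord insubN // -leqNgt. Qed.

Lemma rcoord_mx n (F : nat -> R) j :
  rcoord (\row_(i < n) F i) j = if (j < n)%N then F j else 0.
Proof.
by case: ltnP => h; [rewrite (rcoord_ord _ (Ordinal h)) mxE | rewrite rcoord_out].
Qed.

Lemma rcoord_inj n (u v : 'rV[R]_n) :
  (forall j, (j < n)%N -> rcoord u j = rcoord v j) -> u = v.
Proof. by move=> h; apply/rowP => i; rewrite -!rcoord_ord h. Qed.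

Lemma std_inclE k n (x : 'rV[R]_k) : std_incl n x = \row_(i < n) rcoord x i.
Proof. by []. Qed.

Lemma rcoord_row_mx k (x : 'rV[R]_k) (c : R) j :
  rcoord (row_mx x (\row_(i < 1) c)) j =
  if (j < k)%N then rcoord x j else if j == k then c else 0.
Proof.
case: (ltnP j (k + 1)) => h; last by rewrite rcoord_out // ifF ?ifF //; lia.
rewrite (rcoord_ord _ (Ordinal h)) mxE; case: splitP => /= [a ->|a ->].
  by rewrite ltn_ord rcoord_ord.
by rewrite ord1 mxE addn0 ltnn eqxx.
Qed.

Lemma edist_sqr n (u v : 'rV[R]_n) :
  edist u v ^+ 2 = \sum_(0 <= j < n) (rcoord u j - rcoord v j) ^+ 2.
Proof.
rewrite sqr_sqrtr ?sumr_ge0 // => [|i _]; last exact: sqr_ge0.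
by rewrite big_mkord; apply: eq_bigr => i _; rewrite !rcoord_ord.
Qed.

End Coordinates.

Section Splice.

Variables (R : realType) (n k : nat).
Hypothesis leq_kn : (k <= n)%N.

Local Open Scope complex_scope.

(* The real axis of the plane becomes coordinate k, where the standard
   inclusion of R^(k+1) puts its last coordinate; the imaginary axis is
   appended at the end. *)
Definition splice_coord (v : 'rV[R]_n) (w : R[i]) (j : nat) : R :=
  if (j < k)%N then rcoord v j else if j == k then complex.Re w
  else if (j <= n)%N then rcoord v j.-1 else complex.Im w.

Definition splice v w : 'rV[R]_(n.+2) := \row_(j < n.+2) splice_coord v w j.

Definition splice_row_coord (y : 'rV[R]_(n.+2)) (j : nat) : R :=
  if (j < k)%N then rcoord y j else rcoord y j.+1.

Definition splice_row y : 'rV[R]_n := \row_(j < n) splice_row_coord y j.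

Definition splice_plane (y : 'rV[R]_(n.+2)) : R[i] :=
  rcoord y k +i* rcoord y n.+1.

Ltac coord_cases :=
  repeat (case: ifP => ?); rewrite ?eqxx //=;
  try (exfalso; lia); try (congr rcoord; lia).

Lemma splice_rowK v w : splice_row (splice v w) = v.
Proof.
apply: rcoord_inj => j jn; rewrite /splice_row rcoord_mx jn /splice_row_coord /splice !rcoord_mx /splice_coord.
coord_cases.
Qed.

Lemma splice_planeK v w : splice_plane (splice v w) = w.
Proof. by rewrite /splice_plane /splice !rcoord_mx /splice_coord; case: w => a b; coord_cases. Qed.

Lemma spliceK y : splice (splice_row y) (splice_plane y) = y.
Proof.
apply: rcoord_inj => j jn; rewrite rcoord_mx jn /splice_coord /splice_plane /splice_row !rcoord_mx /splice_row_coord.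
coord_cases.
Qed.

Lemma std_incl_row_mx (x : 'rV[R]_k) (c : R) :
  std_incl n.+2 (row_mx x (\row_(i < 1) c)) = splice (std_incl n x) c%:C.
Proof.
apply: rcoord_inj => j jn.
rewrite std_inclE rcoord_mx jn rcoord_row_mx /splice rcoord_mx /splice_coord std_inclE !rcoord_mx.
coord_cases; by rewrite rcoord_out //; lia.
Qed.

Lemma rcoord_splice_lt v w j : (j < k)%N -> rcoord (splice v w) j = rcoord v j.
Proof. by move=> jk; rewrite rcoord_mx /splice_coord; coord_cases. Qed.

Lemma rcoord_splice_eq v w : rcoord (splice v w) k = complex.Re w.
Proof. by rewrite rcoord_mx /splice_coord; coord_cases. Qed.

Lemma rcoord_splice_gt v w j :
  (k <= j < n)%N -> rcoord (splice v w) j.+1 = rcoord v j.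
Proof. by move=> /andP [kj jn]; rewrite rcoord_mx /splice_coord; coord_cases. Qed.

Lemma rcoord_splice_last v w : rcoord (splice v w) n.+1 = complex.Im w.
Proof. by rewrite rcoord_mx /splice_coord; coord_cases. Qed.

Lemma edist_splice v v' w w' :
  edist (splice v w) (splice v' w') ^+ 2 =
  edist v v' ^+ 2 + Normc.normc (w - w') ^+ 2.
Proof.
have -> : Normc.normc (w - w') ^+ 2 =
    (complex.Re w - complex.Re w') ^+ 2 + (complex.Im w - complex.Im w') ^+ 2.
  by case: w w' => a b [a' b']; rewrite sqr_sqrtr // addr_ge0 ?sqr_ge0.
rewrite !edist_sqr big_nat_recr //= (@big_cat_nat _ _ _ k) //=; last by lia.
rewrite (@big_ltn _ _ _ k) ?ltnS // big_add1 /= (@big_cat_nat _ _ _ k 0 n) //=.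
rewrite !rcoord_splice_eq !rcoord_splice_last.
rewrite [in RHS]addrACA -!addrA.
rewrite (@eq_big_nat _ _ _ 0 k _ (fun j => (rcoord v j - rcoord v' j) ^+ 2)); last first.
  by move=> j /andP [_ jk]; rewrite !rcoord_splice_lt.
by rewrite (@eq_big_nat _ _ _ k n _ (fun j => (rcoord v j - rcoord v' j) ^+ 2))
  // => j kjn; rewrite !rcoord_splice_gt.
Qed.

End Splice.

Section Rotation.

Variables (R : realType) (z c : R[i]).

Definition rotation (h : nat) (w : R[i]) : R[i] := c + z ^+ h * (w - c).

Lemma rotation0 w : rotation 0 w = w.
Proof. by rewrite /rotation expr0 mul1r addrC subrK. Qed.

Lemma rotation_mod m a b w :
  z ^+ m = 1 -> rotation ((a + b) %% m) w = rotation a (rotation b w).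
Proof. by move=> zm; rewrite /rotation (expr_mod _ zm) exprD; ring. Qed.

Lemma rotationB h w w' : rotation h w - rotation h w' = z ^+ h * (w - w').
Proof. by rewrite /rotation; ring. Qed.

Lemma rotation1_0 : rotation 1 0 = c * (1 - z).
Proof. by rewrite /rotation; ring. Qed.

End Rotation.

Section UnityRoots.

Variable R : realType.

Lemma normcX (z : R[i]) h : Normc.normc (z ^+ h) = Normc.normc z ^+ h.
Proof.
elim: h => [|h IH]; first by rewrite !expr0 Normc.normc1.
by rewrite !exprS Normc.normcM IH.
Qed.

Lemma normc_unity_root (z : R[i]) p : (0 < p)%N -> z ^+ p = 1 -> Normc.normc z = 1.
Proof.
move=> p_gt0 zp; have nz_ge0 : 0 <= Normc.normc z.
  by case: z {zp} => a b; rewrite sqrtr_ge0.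
by apply/eqP; rewrite -(pexpr_eq1 p_gt0 nz_ge0) -normcX zp Normc.normc1.
Qed.

(* Take a root of 1 + X + ... + X^(p-1). *)
Lemma exists_unity_root p : (1 < p)%N -> exists2 z : R[i], z ^+ p = 1 & z != 1.
Proof.
move=> p_gt1.
have /closed_rootP [z] : size (\poly_(i < p) (1 : R[i])) != 1%N.
  by rewrite size_poly_eq ?oner_eq0 //; case: p p_gt1 => [|[]].
rewrite /root horner_poly => /eqP sum_z.
have {}sum_z : \sum_(i < p) z ^+ i = 0.
  by rewrite -[RHS]sum_z; apply: eq_bigr => i _; rewrite mul1r.
exists z; first by apply/eqP; rewrite -subr_eq0 subrX1 sum_z mulr0.
apply/eqP => z1; move: sum_z; rewrite z1.
under eq_bigr do rewrite expr1n.
by rewrite sumr_const card_ord => /eqP; rewrite pnatr_eq0; case: (p) p_gt1.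
Qed.

End UnityRoots.

Lemma p_torusX_Zp p (gT : finGroupType) (G : {group gT}) :
  p_torus p G -> p_torus p (setX_group G [set: 'Z_p]%G).
Proof.
move=> [al [_ [f [f_inj [f_im fM]]]]].
exists al.+1; split => //.
pose tail (a : Zp_pow p al.+1) : Zp_pow p al := [ffun i => a (lift ord_max i)].
exists (fun a => (f (tail a), a ord_max)); split; [|split].
- move=> a b [/f_inj/ffunP tail_ab ab_max]; apply/ffunP => j.
  case: (unliftP ord_max j) => [i ->|-> //].
  by have := tail_ab i; rewrite !ffunE.
- apply/setP => -[g h]; rewrite in_setX in_setT andbT -f_im.
  apply/imsetP/imsetP => [[a _ [-> _]]|[b _ ->]]; first by exists (tail a).
  exists [ffun j => if unlift ord_max j is Some i then b i else h] => //.
  congr (_, _); last by rewrite ffunE unlift_none.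
  by congr f; apply/ffunP => i; rewrite !ffunE liftK.
- move=> a b; congr (_, _); last by rewrite ffunE.
  by rewrite /= -fM; congr f; apply/ffunP => i; rewrite !ffunE.
Qed.

Section SpliceAction.

Variables (R : realType) (p n k : nat) (gT : finGroupType) (G : {group gT}).
Variables (act : gT -> 'rV[R]_n -> 'rV[R]_n) (z c : R[i]).
Hypotheses (leq_kn : (k <= n)%N) (p_gt1 : (1 < p)%N) (z_unity : z ^+ p = 1).
Hypothesis actG : isometric_action G act.

Definition splice_action (gh : gT * 'Z_p) (y : 'rV[R]_(n.+2)) :=
  splice k (act gh.1 (splice_row k y)) (rotation z c gh.2 (splice_plane k y)).

Lemma splice_actionE g h v w :
  splice_action (g, h) (splice k v w) = splice k (act g v) (rotation z c h w).
Proof. by rewrite /splice_action splice_rowK ?splice_planeK. Qed.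

Lemma isometric_splice_action :
  isometric_action (setX_group G [set: 'Z_p]%G) splice_action.
Proof.
have [act1 [actM act_iso]] := actG.
split; [|split].
- by move=> y; rewrite /splice_action act1 rotation0 (spliceK leq_kn).
- move=> [g1 h1] [g2 h2]; rewrite !in_setX !in_setT !andbT /= => g1G g2G y.
  have z_order : z ^+ (Zp_trunc p).+2 = 1 by rewrite Zp_cast.
  have -> : ((g1, h1) * (g2, h2))%g = (g1 * g2, h1 * h2)%g by [].
  rewrite -[y in LHS](spliceK leq_kn) !splice_actionE actM //.
  by rewrite -(rotation_mod _ _ _ _ z_order).
- move=> [g h]; rewrite in_setX in_setT andbT /= => gG y y'.
  rewrite -(spliceK leq_kn y) -(spliceK leq_kn y') !splice_actionE.
  apply/eqP; rewrite -(eqrXn2 (ltn0Sn 1)) ?sqrtr_ge0 //; apply/eqP.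
  rewrite !edist_splice // act_iso // rotationB Normc.normcM normcX.
  by rewrite (normc_unity_root (ltnW p_gt1) z_unity) expr1n mul1r.
Qed.

End SpliceAction.

Theorem lemma3 (R : realType) (p : nat) (t : R) (k : nat) (X : 'rV[R]_k -> Prop) :
  prime p -> euclidean_sub_p_toral p X -> euclidean_sub_p_toral p (times_0t X t).
Proof.
move=> p_prime [n [leq_kn [gT [G [torusG [act [actG [x0 orbitX]]]]]]]].
have p_gt1 := prime_gt1 p_prime.
have [z z_unity z_neq1] := exists_unity_root R p_gt1.
pose c : R[i] := (t%:C)%C / (1 - z).
exists n.+2; split; first by lia.
exists _, (setX_group G [set: 'Z_p]%G); split; first exact: p_torusX_Zp.
exists (splice_action k act z c); split; first exact: isometric_splice_action.
exists (splice k x0 0) => _ [x [s [Xx [s0t ->]]]].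
have [g gG orbit_x] := orbitX x Xx.
rewrite std_incl_row_mx // orbit_x.
case: s0t => ->.
  exists (g, 0%R); first by rewrite in_setX gG in_setT.
  by rewrite splice_actionE // rotation0.
exists (g, 1%R); first by rewrite in_setX gG in_setT.
by rewrite splice_actionE // rotation1_0 divfK // subr_eq0 eq_sym.
Qed.
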